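(* Let $\mathcal{T} = \{T_1, \ldots, T_t\}$ be a set of unrooted binary phylogenetic trees on a common leaf set $X$ with $n = |X|$, and let $\mathcal{Q}$ be the set of quartets that are incompatible quartets of $T_1$ and $T_i$ for some $2 \le i \le t$. Then there is a feasible solution $\tilde x$ of the linear program $$\text{minimize } \sum_{e \in E(T_1)} x_e \quad \text{s.t. } \sum_{e \in L(Q)} x_e \ge 1 \ \ \forall Q \in \mathcal{Q}, \qquad x_e \ge 0\ \ \forall e \in E(T_1)$$ with $\sum_{e \in E(T_1)} \tilde x_e = n/4$.
   Context: A (binary) phylogenetic tree on a finite set $X$ is an unrooted tree whose internal vertices have degree 3 and whose leaves are bijectively labelled by $X$. Two phylogenetic trees on $X$ are isomorphic ($\cong$) if there is a graph isomorphism between them fixing every leaf label. For $Y \subseteq X$, $T[Y]$ is the minimal subtree of $T$ connecting the leaves in $Y$, and $T|_Y$ is obtained from $T[Y]$ by suppressing all degree-2 vertices. A quartet is a 4-element subset of $X$; for $Q=\{a,b,c,d\}$, $ab|cd$ is the tree on $Q$ where $a,b$ share a neighbour $u$, $c,d$ share a neighbour $v$, and $u,v$ are adjacent. If $T_1|_Q \cong ab|cd$, $L(Q)$ is the set of edges of $T_1[\{a,b\}] \cup T_1[\{c,d\}]$. $Q$ is an incompatible quartet of $T_1,T_i$ if $T_1|_Q \not\cong T_i|_Q$. *)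

From HB Require Import structures.
From mathcomp Require Import all_boot all_order all_algebra.
From mathcomp Require Import boolp.
Set Implicit Arguments. Unset Strict Implicit. Unset Printing Implicit Defensive.

(* A tree is a finite simple graph (symmetric, irreflexive adjacency) that is
   connected and has no cycle. *)
Record ptree (X : finType) := PTree {
  pV : finType;
  padj : rel pV;
  padj_sym : symmetric padj;
  padj_irr : irreflexive padj;
  pconn : forall u v : pV, exists s, path padj u s /\ last u s = v;
  pacyc : forall (u : pV) (s : seq pV),
      uniq (u :: s) -> 1 < size s -> path padj u s -> ~~ padj (last u s) u;
  plab : X -> pV;
  plab_inj : injective plab;
  pleaf : forall v : pV, (v \in codom plab) = (#|[set w | padj v w]| <= 1);
  pint : forall v : pV, 1 < #|[set w | padj v w]| -> #|[set w | padj v w]| = 3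
}.

Section Trees.
Variable X : finType.
Variable PT : ptree X.
Local Notation V := (pV PT).
Local Notation adj := (@padj _ PT).

Definition Edges : {set {set V}} :=
  [set e : {set V} | [exists u, exists v, adj u v && (e == [set u; v])]].

Definition spath (y y' : V) (s : seq V) : Prop :=
  path adj y s /\ last y s = y' /\ uniq (y :: s).

(* vertices and edges of the minimal subtree T[Y]: union of the paths
   between leaves labelled in Y *)
Definition subtree_vertex (Y : {set X}) (w : V) : Prop :=
  exists y y' s, [/\ y \in Y, y' \in Y, spath (plab PT y) (plab PT y') s
                    & w \in plab PT y :: s].

Definition subtree_edge (Y : {set X}) (e : {set V}) : Prop :=
  exists y y' s s1 u v s2,
    [/\ y \in Y, y' \in Y, spath (plab PT y) (plab PT y') s,
        plab PT y :: s = s1 ++ u :: v :: s2 & e = [set u; v]].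

Definition Vsub (Y : {set X}) : {set V} := [set w | `[< subtree_vertex Y w >]].
Definition Esub (Y : {set X}) : {set {set V}} := [set e | `[< subtree_edge Y e >]].

Definition degsub (Y : {set X}) (w : V) : nat :=
  #|[set z | [set w; z] \in Esub Y]|.

(* T|_Y : vertices of T[Y] not of degree 2; two of them are adjacent iff
   they are joined by a path of T[Y] all of whose interior vertices have
   degree 2 in T[Y] (i.e. suppression of degree-2 vertices). *)
Definition RVert (Y : {set X}) : {set V} :=
  [set w in Vsub Y | degsub Y w != 2].

Definition Radj (Y : {set X}) : rel V := fun u v =>
  [&& u \in RVert Y, v \in RVert Y, u != v &
   `[< exists s, [/\ path (fun a b => [set a; b] \in Esub Y) u s,
                     last u s = v, uniq (u :: s) &
                     all (fun z => (z == v) || (degsub Y z == 2)) s] >] ].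

End Trees.

Record lgraph (X : finType) := LGraph {
  lgV : finType;
  lgS : {set lgV};
  lge : rel lgV;            (* adjacency (relevant on lgS) *)
  lglab : X -> lgV
}.

Definition restr (X : finType) (T : ptree X) (Y : {set X}) : lgraph X :=
  @LGraph X (pV T) (@RVert X T Y) (@Radj X T Y) (@plab X T).

Definition lg_iso (X : finType) (G1 G2 : lgraph X) (Y : {set X}) : Prop :=
  exists f : lgV G1 -> lgV G2,
    [/\ {in lgS G1 &, injective f},
        f @: lgS G1 = lgS G2,
        {in lgS G1 &, forall u v, @lge X G2 (f u) (f v) = @lge X G1 u v}
      & forall x, x \in Y -> f (@lglab X G1 x) = @lglab X G2 x].

(* the quartet tree ab|cd: a,b adjacent to u (= inr false),
   c,d adjacent to v (= inr true), u adjacent to v *)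
Definition qadj (X : finType) (a b c d : X) : rel (X + bool)%type :=
  fun p q => match p, q with
  | inl x, inr false => (x == a) || (x == b)
  | inl x, inr true => (x == c) || (x == d)
  | inr false, inl x => (x == a) || (x == b)
  | inr true, inl x => (x == c) || (x == d)
  | inr b1, inr b2 => b1 != b2
  | inl _, inl _ => false
  end.

Definition qtree (X : finType) (a b c d : X) : lgraph X :=
  @LGraph X (X + bool)%type
    [set inl a; inl b; inl c; inl d; inr false; inr true]
    (qadj a b c d) inl.

Definition incompatible (X : finType) (T1 Ti : ptree X) (Q : {set X}) : Prop :=
  ~ lg_iso (restr T1 Q) (restr Ti Q) Q.

Definition LQ (X : finType) (T1 : ptree X) (a b c d : X) : {set {set pV T1}} :=
  @Esub X T1 [set a; b] :|: @Esub X T1 [set c; d].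

From HB Require Import structures.
From mathcomp Require Import all_boot all_order all_algebra.
From mathcomp Require Import boolp.
Import Order.TTheory GRing.Theory Num.Theory.
Set Implicit Arguments. Unset Strict Implicit. Unset Printing Implicit Defensive.

(** Give every edge of [T1] a quarter of the number of leaves it carries, i.e.
  weight 1/4 on pendant edges and 0 on interior ones.  When [|X| <> 1] every
  leaf lies on exactly one edge, so the total weight is [n/4].  For a quartet
  [ab|cd] the path from [a] to [b] starts with the pendant edge of [a] and the
  path from [b] to [a] with that of [b], and likewise for [c] and [d]; hence
  [L(Q)] contains the four pendant edges of [Q] and has weight at least 1.
  This covers every quartet, incompatible or not. *)

Lemma sum_card_incidence (I J : finType) (A : {pred I}) (B : {pred J})
    (r : I -> J -> bool) :
  (\sum_(i in A) #|[set j in B | r i j]| =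
   \sum_(j in B) #|[set i in A | r i j]|)%N.
Proof.
under eq_bigr => i _ do rewrite -sum1dep_card.
under [RHS]eq_bigr => j _ do rewrite -sum1dep_card.
rewrite (exchange_big_dep (mem B)) /=; last by move=> i j _ /andP [].
by apply: eq_bigr => j jB; apply: eq_bigl => i; rewrite jB.
Qed.

Lemma card_set4_uniq (X : finType) (a b c d : X) :
  #|[set a; b; c; d]| = 4%N -> uniq [:: a; b; c; d].
Proof.
move=> H; apply/card_uniqP; rewrite [size _]/= -H; apply/eq_card => z.
by rewrite !inE !orbA.
Qed.

Section PhyloTree.
Variable X : finType.
Variable PT : ptree X.
Local Notation V := (pV PT).
Local Notation adj := (@padj _ PT).
Local Notation lab := (@plab _ PT).

Lemma spath_exists (u v : V) : exists s, spath u v s.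
Proof.
have [s [ps ls]] := pconn u v.
case: (shortenP ps) ls => s' ps' us' _ ls'.
by exists s'; split.
Qed.

Lemma Edges_at (v : V) :
  [set e in Edges PT | v \in e] = (fun w => [set v; w]) @: [set w | adj v w].
Proof.
apply/setP => e; rewrite !inE; apply/andP/imsetP.
  case=> /existsP [a /existsP [b /andP [ab /eqP ->]]].
  rewrite !inE => /orP [] /eqP ->.
    by exists b; rewrite ?inE.
  by exists a; rewrite ?inE 1?padj_sym // setUC.
case=> w; rewrite inE => vw ->; split; last by rewrite !inE eqxx.
by apply/existsP; exists v; apply/existsP; exists w; rewrite vw eqxx.
Qed.

Lemma card_Edges_at (v : V) :
  #|[set e in Edges PT | v \in e]| = #|[set w | adj v w]|.
Proof.
rewrite Edges_at; apply: card_in_imset => w1 w2; rewrite !inE => vw1 _ E.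
have : w1 \in [set v; w2] by rewrite -E !inE eqxx orbT.
rewrite !inE => /orP [/eqP vw | /eqP //].
by move: vw1; rewrite vw padj_irr.
Qed.

Lemma card_adj_leaf (y : X) : #|X| != 1%N -> #|[set w | adj (lab y) w]| = 1%N.
Proof.
move=> nX1.
have le1 : #|[set w | adj (lab y) w]| <= 1 by rewrite -pleaf codom_f.
have [y' y'y] : exists y', y' != y.
  apply/existsP; move: nX1; apply: contraR; rewrite negb_exists => /forallP H.
  rewrite -(card1 y); apply/eqP; apply: eq_card => z; rewrite !inE.
  by move: (H z); rewrite negbK.
have [[|w s] [ps ls]] := pconn (lab y) (lab y').
  by move: ls y'y => /= /plab_inj ->; rewrite eqxx.
move: ps => /= /andP [yw _].
apply/eqP; rewrite eqn_leq le1 card_gt0; apply/set0Pn; exists w; by rewrite inE.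
Qed.

Definition leaf_count (e : {set V}) : nat := #|[set y | lab y \in e]|.

Lemma sum_leaf_count_Edges :
  #|X| != 1%N -> (\sum_(e in Edges PT) leaf_count e)%N = #|X|.
Proof.
move=> nX1.
have leaf_countT e : leaf_count e = #|[set y in [set: X] | lab y \in e]|.
  by apply: eq_card => y; rewrite !inE.
under eq_bigr => e _ do rewrite leaf_countT.
rewrite sum_card_incidence -cardsT -sum1_card; apply: eq_bigr => y _.
by rewrite card_Edges_at card_adj_leaf.
Qed.

Lemma Esub_pair_leaf_edge (a b : X) :
  a != b -> exists2 e, e \in Esub PT [set a; b] & lab a \in e.
Proof.
move=> ab; have [[|w s] sp] := spath_exists (lab a) (lab b).
  by case: sp => _ [/= /plab_inj eab _]; move: ab; rewrite eab eqxx.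
exists [set lab a; w]; last by rewrite !inE eqxx.
rewrite inE; apply/asboolP.
by exists a, b, (w :: s), [::], (lab a), w, s; split; rewrite ?inE ?eqxx ?orbT.
Qed.

Lemma LQ_leaf_edge (a b c d y : X) :
  a != b -> c != d -> y \in [set a; b; c; d] ->
  exists2 e, e \in LQ PT a b c d & lab y \in e.
Proof.
have pair_edge u v : u != v -> y \in [set u; v] ->
    exists2 e, e \in Esub PT [set u; v] & lab y \in e.
  move=> uv; rewrite !inE => /orP [] /eqP ->; first exact: Esub_pair_leaf_edge.
  by rewrite setUC; apply: Esub_pair_leaf_edge; rewrite eq_sym.
move=> ab cd; rewrite -setUA => /setUP [yab | ycd].
  by have [e eE ye] := pair_edge _ _ ab yab; exists e; rewrite // in_setU eE.
by have [e eE ye] := pair_edge _ _ cd ycd; exists e; rewrite // in_setU eE orbT.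
Qed.

Lemma sum_leaf_count_LQ (a b c d : X) : a != b -> c != d ->
  #|[set a; b; c; d]| <= \sum_(e in LQ PT a b c d) leaf_count e.
Proof.
move=> ab cd; set Q := [set a; b; c; d].
apply: (@leq_trans (\sum_(e in LQ PT a b c d) #|[set y in Q | lab y \in e]|)).
  rewrite sum_card_incidence -sum1_card; apply: leq_sum => y yQ.
  rewrite card_gt0; apply/set0Pn.
  by have [e eLQ ye] := LQ_leaf_edge ab cd yQ; exists e; rewrite inE eLQ.
apply: leq_sum => e _; apply: subset_leq_card; apply/subsetP => y.
by rewrite !inE => /andP [].
Qed.

End PhyloTree.

Local Open Scope ring_scope.

Theorem lemma7 (R : realFieldType) (X : finType) (t : nat)
    (T : 'I_t.+1 -> ptree X) :
  #|X| != 1%N ->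
  exists x : {set pV (T ord0)} -> R,
    [/\ (forall e, e \in Edges (T ord0) -> 0 <= x e),
        (forall Q : {set X},
           #|Q| = 4%N ->
           (exists i : 'I_t.+1, i != ord0 /\ incompatible (T ord0) (T i) Q) ->
           forall a b c d : X,
             Q = [set a; b; c; d] ->
             lg_iso (restr (T ord0) Q) (qtree a b c d) Q ->
             1 <= \sum_(e in LQ (T ord0) a b c d) x e)
      & \sum_(e in Edges (T ord0)) x e = #|X|%:R / 4].
Proof.
move=> nX1; exists (fun e => (leaf_count e)%:R / 4); split.
- by move=> e _; rewrite divr_ge0 // ler0n.
- move=> Q Q4 _ a b c d defQ _.
  move: (Q4); rewrite defQ => /card_set4_uniq /=.
  rewrite !inE !negb_or => /and4P [/and3P [ab _ _] _ cd _].
  rewrite -mulr_suml -natr_sum ler_pdivlMr // mul1r ler_nat -Q4 defQ.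
  exact: sum_leaf_count_LQ.
- by rewrite -mulr_suml -natr_sum sum_leaf_count_Edges.
Qed.
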